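(* For every $n\ge1$, the smallest size $C(n)$ of a banded asymmetric covering $\mathcal{D}(n,1)$ is $$C(n)=\sum_{i=0}^{\lfloor n/2\rfloor}C(n+1,\,n+1-2i,\,n-2i).$$
   Context: An asymmetric covering $\mathcal{D}(n,1)$ is a set $\mathcal{D}\subseteq\mathbb{F}_2^n$ such that every $v\in\mathbb{F}_2^n$ either lies in $\mathcal{D}$ or is covered by (has support contained in the support of) some $u\in\mathcal{D}$ with $\mathrm{wt}(u)=\mathrm{wt}(v)+1$. It is banded if every $v$ of odd co-weight $n-\mathrm{wt}(v)$ is covered by some $u\in\mathcal{D}$ with $\mathrm{wt}(u)=\mathrm{wt}(v)+1$. $C(v,k,t)$ denotes the smallest size of a covering design $\mathcal{C}(v,k,t)$, i.e. a collection of $k$-subsets of a $v$-set such that every $t$-subset is contained in at least one of them. *)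

From mathcomp Require Import all_boot.
Set Implicit Arguments. Unset Strict Implicit. Unset Printing Implicit Defensive.

(* A vector v in F_2^n is represented by its support, a subset of 'I_n.
   wt v = #|v|; "u covers v" means supp v ⊆ supp u and wt u = wt v + 1. *)
Definition covers (n : nat) (u v : {set 'I_n}) : bool :=
  (v \subset u) && (#|u| == #|v|.+1).

Definition asym_covering (n : nat) (D : {set {set 'I_n}}) : bool :=
  [forall v : {set 'I_n}, (v \in D) || [exists u in D, covers u v]].

Definition banded (n : nat) (D : {set {set 'I_n}}) : bool :=
  [forall v : {set 'I_n}, odd (n - #|v|) ==> [exists u in D, covers u v]].

Definition banded_asym_covering (n : nat) (D : {set {set 'I_n}}) : bool :=
  asym_covering D && banded D.

Definition is_covering_design (v k t : nat) (B : {set {set 'I_v}}) : bool :=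
  [forall b in B, #|b| == k] &&
  [forall T : {set 'I_v}, (#|T| == t) ==> [exists b in B, T \subset b]].

(* smallest cardinality of a family satisfying P (0 if no such family) *)
Definition min_size (T : finType) (P : pred {set T}) : nat :=
  if [pick x | P x] is Some x0 then #|arg_min x0 P (fun x => #|x|)| else 0.

Definition Cband (n : nat) : nat := min_size (@banded_asym_covering n).

Definition covnum (v k t : nat) : nat := min_size (@is_covering_design v k t).

(* Append to v in F_2^n one extra coordinate, chosen so that the co-weight of the
   result in F_2^(n+1) is even (embed_even) or odd (embed_odd).  For u at level i,
   i.e. of co-weight 2i-1 or 2i, embed_even u has weight n+1-2i; u covers v, or
   u = v has even co-weight, exactly when embed_odd v is an (n-2i)-subset of the
   (n+1-2i)-set embed_even u.  So embed_even maps the level-i part of a banded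
   asymmetric covering onto a covering design C(n+1, n+1-2i, n-2i), and
   conversely pulling optimal designs back level by level gives a banded
   asymmetric covering of size the sum of the covering numbers. *)

From mathcomp Require Import all_boot zify.

Set Implicit Arguments. Unset Strict Implicit. Unset Printing Implicit Defensive.

Section MinSize.

Variables (T : finType) (P : pred {set T}).

Definition min_witness : {set T} :=
  if [pick x | P x] is Some x0 then arg_min x0 P (fun x => #|x|) else set0.

Lemma min_size_leq A : P A -> min_size P <= #|A|.
Proof.
move=> PA; rewrite /min_size; case: pickP => [x0 Px0|/(_ A)]; last by rewrite PA.
by case: arg_minnP => // y Py; apply.
Qed.

Lemma min_witnessP A : P A -> P min_witness /\ #|min_witness| = min_size P.
Proof.
move=> PA; rewrite /min_size /min_witness.
by case: pickP => [x0 Px0|/(_ A)]; [case: arg_minnP | rewrite PA].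
Qed.

End MinSize.

Lemma sum_card_fibres (T : finType) (A : {set T}) (f : T -> nat) m :
  \sum_(0 <= i < m) #|[set x in A | f x == i]| = #|[set x in A | f x < m]|.
Proof.
elim: m => [|m IHm].
  rewrite big_geq //; apply/esym/eqP; rewrite cards_eq0; apply/eqP/setP => x.
  by rewrite !inE ltn0 andbF.
rewrite big_nat_recr //= IHm -cardsUI.
have -> : [set x in A | f x < m] :&: [set x in A | f x == m] = set0.
  by apply/setP => x; rewrite !inE; case: ltngtP; rewrite ?andbF ?andbT.
rewrite cards0 addn0; apply: eq_card => x.
by rewrite !inE -andb_orr orbC -leq_eqVlt ltnS.
Qed.

Lemma covering_design_all_subsets v t : t < v ->
  @is_covering_design v t.+1 t [set b : {set 'I_v} | #|b| == t.+1].
Proof.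
move=> ltvt; apply/andP; split; first by apply/forallP => b; apply/implyP; rewrite inE.
apply/forallP => T; apply/implyP => /eqP cardT.
have : 0 < #|~: T| by rewrite cardsCs setCK card_ord cardT subn_gt0.
case/card_gt0P => x; rewrite inE => xNT.
by apply/existsP; exists (x |: T); rewrite inE cardsU1 xNT cardT eqxx subsetUr.
Qed.

Section ExtendRestrict.

Variable n : nat.
Implicit Types (v w : {set 'I_n}) (b : {set 'I_n.+1}).

Definition extend (top : bool) v : {set 'I_n.+1} :=
  let w := [set lift ord_max j | j in v] in if top then ord_max |: w else w.

Definition restrict b : {set 'I_n} := [set j | lift ord_max j \in b].

Lemma max_notin_lift v : ord_max \notin [set lift ord_max j | j in v].
Proof. by apply/imsetP => -[j _] /eqP; rewrite (negbTE (neq_lift _ _)). Qed.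

Lemma mem_max_extend top v : (ord_max \in extend top v) = top.
Proof. by rewrite /extend; case: top; rewrite ?setU11 // (negbTE (max_notin_lift v)). Qed.

Lemma card_extend top v : #|extend top v| = #|v| + top.
Proof.
rewrite /extend; case: top => /=; rewrite ?cardsU1 ?max_notin_lift.
  by rewrite (card_imset _ (@lift_inj _ ord_max)) addnC.
by rewrite (card_imset _ (@lift_inj _ ord_max)) addn0.
Qed.

Lemma mem_lift_extend top v j : (lift ord_max j \in extend top v) = (j \in v).
Proof.
have liftI := @lift_inj _ (@ord_max n).
by case: top; rewrite /= ?inE (mem_imset _ _ liftI) // eq_sym (negbTE (neq_lift _ _)).
Qed.

Lemma restrict_extend top v : restrict (extend top v) = v.
Proof. by apply/setP => j; rewrite inE mem_lift_extend. Qed.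

Lemma extend_restrict b : extend (ord_max \in b) (restrict b) = b.
Proof.
apply/setP => k; case: (unliftP ord_max k) => [j ->|->].
  by rewrite mem_lift_extend inE.
by rewrite mem_max_extend.
Qed.

End ExtendRestrict.

Section ParityEmbeddings.

Variable n : nat.
Implicit Types (u v w : {set 'I_n}) (b : {set 'I_n.+1}).

Lemma leq_card_ord v : #|v| <= n.
Proof. by rewrite -[n in _ <= n]card_ord max_card. Qed.

Lemma card_restrict b : #|b| = #|restrict b| + (ord_max \in b).
Proof. by rewrite -{1}(extend_restrict b) card_extend. Qed.

Lemma restrictS b1 b2 : b1 \subset b2 -> restrict b1 \subset restrict b2.
Proof. by move=> /subsetP sub12; apply/subsetP => j; rewrite !inE => /sub12. Qed.

Lemma extendS top1 top2 v w :
  v \subset w -> top1 ==> top2 -> extend top1 v \subset extend top2 w.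
Proof.
move=> /subsetP svw top12; apply/subsetP => k.
case: (unliftP ord_max k) => [j ->|->]; rewrite ?mem_lift_extend ?mem_max_extend.
  exact: svw.
exact: implyP.
Qed.

Definition embed_even u := extend (~~ odd (n - #|u|)) u.
Definition embed_odd v := extend (odd (n - #|v|)) v.
Definition level u := (n - #|u|).+1./2.

Lemma embed_evenK : cancel embed_even (@restrict n).
Proof. by move=> u; apply: restrict_extend. Qed.

Lemma card_embed_even u : #|embed_even u| = n.+1 - 2 * level u.
Proof. by rewrite card_extend /level; move: #|u| (leq_card_ord u) => k; lia. Qed.

Lemma card_embed_odd v : #|embed_odd v| = n - 2 * (n - #|v|)./2.
Proof. by rewrite card_extend; have := leq_card_ord v; lia. Qed.

Lemma embed_even_restrict b : ~~ odd (n.+1 - #|b|) -> embed_even (restrict b) = b.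
Proof.
move=> even_b; rewrite -[RHS]extend_restrict /embed_even; congr extend.
by move: even_b; rewrite card_restrict; have := leq_card_ord (restrict b); lia.
Qed.

Lemma embed_odd_restrict b : odd (n.+1 - #|b|) -> embed_odd (restrict b) = b.
Proof.
move=> odd_b; rewrite -[RHS]extend_restrict /embed_odd; congr extend.
by move: odd_b; rewrite card_restrict; have := leq_card_ord (restrict b); lia.
Qed.

Definition serves u v := covers u v || (u == v) && ~~ odd (n - #|v|).

Lemma banded_asym_coveringP (D : {set {set 'I_n}}) :
  reflect (forall v, exists2 u, u \in D & serves u v) (banded_asym_covering D).
Proof.
apply: (iffP andP) => [[/forallP covD /forallP bandD] v | servedD].
  case: (boolP (odd (n - #|v|))) => [odd_v | even_v].
    have /existsP[u /andP[uD cuv]] := implyP (bandD v) odd_v.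
    by exists u; rewrite // /serves cuv.
  case/orP: (covD v) => [vD | /existsP[u /andP[uD cuv]]].
    by exists v; rewrite // /serves eqxx even_v orbT.
  by exists u; rewrite // /serves cuv.
split; apply/forallP => v; have [u uD /orP[cuv | /andP[/eqP uv even_v]]] := servedD v.
- by apply/orP; right; apply/existsP; exists u; rewrite uD cuv.
- by rewrite -uv uD.
- by apply/implyP => _; apply/existsP; exists u; rewrite uD cuv.
- by apply/implyP => odd_v; rewrite odd_v in even_v.
Qed.

Lemma serves_level u v : serves u v -> level u = (n - #|v|)./2.
Proof.
rewrite /level; case/orP => [/andP[_ /eqP cuv] | /andP[/eqP-> even_v]].
  by move: #|u| #|v| cuv (leq_card_ord u) => k l; lia.
by move: #|v| even_v => k; lia.
Qed.

Lemma serves_subset u v : serves u v -> embed_odd v \subset embed_even u.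
Proof.
case/orP => [/andP[svu /eqP cuv] | /andP[/eqP-> even_v]].
  apply: extendS => //; move: #|u| #|v| cuv (leq_card_ord u) => k l; lia.
by apply: extendS; rewrite ?(negbTE even_v).
Qed.

Lemma serves_of_subset u v : embed_odd v \subset embed_even u ->
  #|embed_even u| = #|embed_odd v|.+1 -> serves u v.
Proof.
move=> sub_vu card_vu.
have svu : v \subset u.
  by rewrite -(embed_evenK u) -(restrict_extend (odd (n - #|v|)) v) restrictS.
have parity_vu : odd (n - #|v|) ==> ~~ odd (n - #|u|).
  apply/implyP => odd_v.
  by have := subsetP sub_vu ord_max; rewrite !mem_max_extend; apply.
rewrite !card_extend in card_vu; rewrite /serves /covers svu /=.
case: eqP => //= ncuv.
have [cuv even_v] : #|u| = #|v| /\ ~~ odd (n - #|v|).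
  by move: ncuv card_vu parity_vu (leq_card_ord u); move: #|u| #|v| => k l; lia.
by rewrite even_v andbT eq_sym eqEcard svu cuv leqnn.
Qed.

End ParityEmbeddings.

Section Designs.

Variable n : nat.
Implicit Type D : {set {set 'I_n}}.

Definition design_of_level i := @is_covering_design n.+1 (n.+1 - 2 * i) (n - 2 * i).

Definition layer D i := [set u in D | level u == i].

Lemma layer_covering_design D i : banded_asym_covering D -> 2 * i <= n ->
  design_of_level i (@embed_even n @: layer D i).
Proof.
move=> /banded_asym_coveringP servedD le2in; apply/andP; split.
  apply/forallP => b; apply/implyP => /imsetP[u]; rewrite inE => /andP[_ /eqP <-] ->.
  by rewrite card_embed_even.
apply/forallP => T; apply/implyP => /eqP cardT.
have odd_T : odd (n.+1 - #|T|) by rewrite cardT; lia.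
have [u uD serves_uv] := servedD (restrict T).
have level_u : level u = i.
  rewrite (serves_level serves_uv); move: cardT.
  by rewrite -{1}(embed_odd_restrict odd_T) card_embed_odd; move: #|restrict T| => k; lia.
apply/existsP; exists (embed_even u); rewrite imset_f ?inE ?uD ?level_u //=.
by rewrite -{1}(embed_odd_restrict odd_T) serves_subset.
Qed.

Lemma sum_covnum_leq_card D : banded_asym_covering D ->
  \sum_(0 <= i < n./2.+1) covnum n.+1 (n.+1 - 2 * i) (n - 2 * i) <= #|D|.
Proof.
move=> covD; apply: (@leq_trans (\sum_(0 <= i < n./2.+1) #|layer D i|)).
  rewrite !big_nat; apply: leq_sum => i /andP[_ lti].
  apply: leq_trans (leq_imset_card (@embed_even n) _).
  by apply: min_size_leq; apply: layer_covering_design => //; lia.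
rewrite sum_card_fibres; apply/subset_leq_card/subsetP => u.
by rewrite inE => /andP[].
Qed.

Variable B : nat -> {set {set 'I_n.+1}}.
Hypothesis designB : forall i, 2 * i <= n -> design_of_level i (B i).

(* For odd n the empty set has level (n+1)/2; it is covered by a set of level
   n./2. *)
Definition pullback_designs :=
  [set u | (level u <= n./2) && (embed_even u \in B (level u))].

Lemma pullback_designs_covering : banded_asym_covering pullback_designs.
Proof.
apply/banded_asym_coveringP => v; pose i := (n - #|v|)./2.
have le2in : 2 * i <= n by rewrite /i; lia.
case/andP: (designB le2in) => /forallP cardB /forallP coverB.
have /existsP[b /andP[bB sub_vb]] :=
  implyP (coverB (embed_odd v)) (introT eqP (card_embed_odd v)).
have /eqP card_b := implyP (cardB b) bB.
have embed_b : embed_even (restrict b) = b.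
  by apply: embed_even_restrict; rewrite card_b; lia.
have serves_bv : serves (restrict b) v.
  by apply: serves_of_subset; rewrite embed_b // card_b card_embed_odd -/i subSn.
exists (restrict b) => //.
by rewrite inE (serves_level serves_bv) embed_b bB andbT; lia.
Qed.

Lemma card_pullback_designs :
  #|pullback_designs| <= \sum_(0 <= i < n./2.+1) #|B i|.
Proof.
have -> : pullback_designs = [set u in pullback_designs | level u < n./2.+1].
  by apply/setP => u; rewrite !inE ltnS; case: (level u <= n./2); rewrite ?andbT.
rewrite -(sum_card_fibres _ (@level n)) !big_nat; apply: leq_sum => i _.
rewrite -(card_imset _ (can_inj (@embed_evenK n))); apply/subset_leq_card/subsetP.
by move=> b /imsetP[u]; rewrite !inE => /andP[/andP[_ uB] /eqP <-] ->.
Qed.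

End Designs.

Theorem corollary2 (n : nat) : 1 <= n ->
  Cband n = \sum_(0 <= i < n./2.+1) covnum n.+1 (n.+1 - 2 * i) (n - 2 * i).
Proof.
(* The identity also holds for n = 0. *)
move=> _; pose B i := min_witness (@design_of_level n i).
have optB i : 2 * i <= n ->
    @design_of_level n i (B i) /\ #|B i| = covnum n.+1 (n.+1 - 2 * i) (n - 2 * i).
  move=> le2in; apply: min_witnessP.
  rewrite /design_of_level subSn //; apply: covering_design_all_subsets; lia.
have covB := pullback_designs_covering (fun i le2in => (optB i le2in).1).
apply/eqP; rewrite eqn_leq; apply/andP; split.
  apply: leq_trans (min_size_leq covB) (leq_trans (card_pullback_designs B) _).
  rewrite !big_nat; apply: leq_sum => i /andP[_ lti].
  by rewrite (optB i _).2 //; lia.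
rewrite /Cband; have [covD <-] := min_witnessP covB.
exact: sum_covnum_leq_card.
Qed.
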